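(* Let $N, D$ be positive integers with $N \ge 2$, and let $\mathcal{G}$ be the complete graph on $N$ nodes. For any weight matrix $\mathbf{W} \in \mathbb{R}^{D\times D}$, the class $\mathcal{F}_{\mathcal{G},\mathbf{W}}$ of all maps $\hat f : \mathbb{R}^{N\times D} \to \mathbb{R}$ of the form $\hat f = \mathrm{MLP} \circ \mathcal{L}^{\mathrm{conv}}_{\mathcal{G},\mathbf{W}}$, where $\mathcal{L}^{\mathrm{conv}}_{\mathcal{G},\mathbf{W}}(\mathbf{X}) = \tilde{\mathbf{A}}\mathbf{X}\mathbf{W}$ and $\mathrm{MLP}$ ranges over all multilayer perceptrons $\mathbb{R}^{N\times D}\to\mathbb{R}$ with $\mathrm{SiLU}$ activation, is not a universal approximator in $\mathcal{C}(\mathbb{R}^{N\times D})$.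
   Context: $\mathrm{SiLU}(x) = x/(1+e^{-x})$, applied elementwise. $\tilde{\mathbf{A}} \in \mathbb{R}^{N\times N}$ is the degree-normalized adjacency matrix with self-loops: $\tilde{\mathbf{A}}_{ij} = 1/\sqrt{\deg(v_i)\deg(v_j)}$ if $v_i, v_j$ are adjacent or $i=j$, and $0$ otherwise, where degrees count the self-loop; for the complete graph every entry of $\tilde{\mathbf{A}}$ equals $1/N$. MLPs take the matrix input $\mathbf{X}$ (viewed as a vector in $\mathbb{R}^{ND}$) to a real number. $\mathcal{C}(\mathbb{R}^{N\times D})$ denotes the continuous functions $\mathbb{R}^{N\times D}\to\mathbb{R}$. A class $\mathcal{F} \subseteq \mathcal{C}(\mathbb{R}^{N\times D})$ is a universal approximator if for every continuous $f:\mathbb{R}^{N\times D}\to\mathbb{R}$, every $\varepsilon>0$ and every nonempty compact $K \subset \mathbb{R}^{N\times D}$ there is $\hat f \in \mathcal{F}$ with $\max_{\mathbf{X}\in K}|f(\mathbf{X}) - \hat f(\mathbf{X})| < \varepsilon$. *)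

From HB Require Import structures.
From mathcomp Require Import all_boot all_order all_algebra.
From mathcomp Require Import all_classical all_reals all_analysis.
Set Implicit Arguments. Unset Strict Implicit. Unset Printing Implicit Defensive.
Import Order.TTheory GRing.Theory Num.Theory.
Import numFieldNormedType.Exports.
Local Open Scope classical_set_scope.
Local Open Scope ring_scope.

Definition silu {R : realType} (x : R) : R := x / (1 + expR (- x)).

Inductive mlp (R : realType) : nat -> Type :=
| mlp_out (n : nat) (w : 'cV[R]_n) (c : R) : mlp R n
| mlp_layer (n m : nat) (W : 'M[R]_(n, m)) (b : 'rV[R]_m) (rest : mlp R m) : mlp R n.

Fixpoint mlp_eval (R : realType) (n : nat) (M : mlp R n) : 'rV[R]_n -> R :=
  match M in mlp _ n return 'rV[R]_n -> R with
  | mlp_out _ w c => fun x => (x *m w) 0 0 + c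
  | mlp_layer _ _ W b rest => fun x => mlp_eval rest (map_mx silu (x *m W + b))
  end.

Definition deg_sl (N : nat) (adj : rel 'I_N) (i : 'I_N) : nat :=
  #|[set j : 'I_N | (i == j) || adj i j]|.

Definition norm_adj {R : realType} (N : nat) (adj : rel 'I_N) : 'M[R]_N :=
  \matrix_(i, j) (if (i == j) || adj i j
                  then (Num.sqrt ((deg_sl adj i)%:R * (deg_sl adj j)%:R))^-1
                  else 0).

Definition complete_adj (N : nat) : rel 'I_N := fun i j => i != j.

Definition conv_layer {R : realType} (N D : nat) (adj : rel 'I_N) (W : 'M[R]_D)
  (X : 'M[R]_(N, D)) : 'M[R]_(N, D) := norm_adj adj *m X *m W.

Definition conv_mlp_class {R : realType} (N D : nat) (adj : rel 'I_N) (W : 'M[R]_D)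
  : set ('M[R]_(N, D) -> R) :=
  [set fh | exists M : mlp R (N * D),
      fh = fun X => mlp_eval M (mxvec (conv_layer adj W X))].

Definition universal_approximator {R : realType} (N D : nat)
  (F : set ('M[R]_(N, D) -> R)) : Prop :=
  forall f : 'M[R]_(N, D) -> R, continuous f ->
  forall eps : R, 0 < eps ->
  forall K : set 'M[R]_(N, D), compact K -> K !=set0 ->
  exists2 fh, F fh & forall X, K X -> `|f X - fh X| < eps.

From HB Require Import structures.
From mathcomp Require Import all_boot all_order all_algebra.
From mathcomp Require Import all_classical all_reals all_analysis.
Import Order.TTheory GRing.Theory Num.Theory.
Import numFieldNormedType.Exports.
Set Implicit Arguments. Unset Strict Implicit. Unset Printing Implicit Defensive.
Local Open Scope classical_set_scope.
Local Open Scope ring_scope.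

(* On the complete graph every entry of the normalized adjacency is 1/N, so
   the convolution only sees the column sums of X: moving a unit feature from
   one node to another does not change its output.  A universal approximator
   must separate any two distinct inputs (approximate the distance to the
   first one within half their distance), hence F_{G,W} is not one. *)

Lemma deg_sl_complete (N : nat) (i : 'I_N) : deg_sl (@complete_adj N) i = N.
Proof.
rewrite /deg_sl -[RHS]card_ord; apply: eq_card => j.
by apply/idP; rewrite in_setE /= /complete_adj orbN.
Qed.

Lemma norm_adj_complete (R : realType) (N : nat) :
  norm_adj (@complete_adj N) = const_mx (N%:R^-1 : R).
Proof.
apply/matrixP => i j; rewrite !mxE /complete_adj orbN !deg_sl_complete.
by rewrite -expr2 sqrtr_sqr ger0_norm.
Qed.

Lemma mul_const_mx_delta_mx (R : pzSemiRingType) (m n p : nat) (a : R)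
    (i : 'I_n) (k : 'I_p) :
  const_mx a *m delta_mx i k = \matrix_(r < m, c < p) (a * (c == k)%:R).
Proof.
apply/matrixP => r c; rewrite !mxE (bigD1 i) //= big1 ?addr0.
  by rewrite !mxE eqxx.
by move=> l /negPf neq_li; rewrite !mxE neq_li mulr0.
Qed.

Lemma continuous_norm_subr (R : realType) (m n : nat) (A : 'M[R]_(m, n)) :
  continuous (fun X : 'M[R]_(m, n) => `|X - A|).
Proof.
move=> X; apply: continuous_comp; last exact: norm_continuous.
exact: (continuousD cvg_id (@cst_continuous _ _ _ _)).
Qed.

Lemma universal_approximator_separates (R : realType) (N D : nat)
    (F : set ('M[R]_(N, D) -> R)) (X1 X2 : 'M[R]_(N, D)) :
  universal_approximator F -> X1 != X2 -> exists2 fh, F fh & fh X1 != fh X2.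
Proof.
move=> UA neqX; set d := `|X2 - X1|.
have d_gt0 : 0 < d by rewrite normr_gt0 subr_eq0 eq_sym.
have [fh Ffh approx] := UA _ (continuous_norm_subr (A := X1)) _
  (divr_gt0 d_gt0 (ltr0Sn _ 1)) _
  (compactU (compact_set1 (x := X1)) (compact_set1 (x := X2)))
  (ex_intro _ X1 (or_introl erefl)).
exists fh => //; apply/eqP => eq_fh.
have approx1 := approx X1 (or_introl erefl).
have approx2 := approx X2 (or_intror erefl).
rewrite distrC eq_fh in approx1; rewrite distrC -/d in approx2.
have := distm_lt_splitr approx1 approx2.
by rewrite subrr normr0 sub0r normrN normr_id ltxx.
Qed.

Theorem theorem1 (R : realType) (N D : nat) (hN : (2 <= N)%N) (hD : (0 < D)%N)
  (W : 'M[R]_D) :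
  ~ universal_approximator (conv_mlp_class (@complete_adj N) W).
Proof.
move=> UA; pose c : 'I_D := Ordinal hD.
pose X1 : 'M[R]_(N, D) := delta_mx (Ordinal (ltnW hN)) c.
pose X2 : 'M[R]_(N, D) := delta_mx (Ordinal hN) c.
have neqX : X1 != X2.
  apply/eqP => /matrixP/(_ (Ordinal hN) c)/eqP.
  by rewrite !mxE !eqxx eq_sym oner_eq0.
have [_ [M ->]] := universal_approximator_separates UA neqX.
by rewrite /conv_layer norm_adj_complete !mul_const_mx_delta_mx => /eqP; apply.
Qed.
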